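(* Let $R$ be an associative ring with identity and $M$ a left $R$-module that is projective in $\sigma[M]$. Then: (1) $\Lambda(M)$, with the product $N_ML$, is a quasi-quantale; in fact $(\sum_{i\in I}N_i)_ML=\sum_{i\in I}(N_{i\,M}L)$ for every family $\{N_i\}_{i\in I}\subseteq\Lambda(M)$ and every $L\in\Lambda(M)$. (2) $\Lambda^{fi}(M)$ is a right-unital subquasi-quantale of $\Lambda(M)$: it is closed under arbitrary sums and under the product, and $N_MM=N$ for all $N\in\Lambda^{fi}(M)$.
   Context: $\Lambda(M)$ is the complete lattice of submodules of $M$ (join = sum, meet = intersection), and $\Lambda^{fi}(M)$ is the set of fully invariant submodules $N$ (i.e. $f(N)\subseteq N$ for all $f\in\mathrm{End}_R(M)$). For $N,L\in\Lambda(M)$, $N_ML=\sum\{f(N)\mid f\in\mathrm{Hom}_R(M,L)\}$. $\sigma[M]$ is the full subcategory of left $R$-modules isomorphic to submodules of $M$-generated modules. A quasi-quantale is a complete lattice with an associative product $(a,b)\mapsto ab$ such that $(\bigvee X)a=\bigvee\{xa\mid x\in X\}$ and $a(\bigvee X)=\bigvee\{ax\mid x\in X\}$ for every directed (non-empty, upward-directed) subset $X$ and every element $a$. *)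

(* Left modules over an (associative, unital, not
   necessarily commutative) ring R are [lmodType R] with R : pzRingType. *)
From HB Require Import structures.
From mathcomp Require Import all_boot all_order all_algebra.
Set Implicit Arguments.
Unset Strict Implicit.
Unset Printing Implicit Defensive.
Import GRing.Theory.
Local Open Scope ring_scope.

Section ModuleDefs.
Variable R : pzRingType.

Definition hom (M N : lmodType R) (f : M -> N) : Prop :=
  forall (a : R) (x y : M), f (a *: x + y) = a *: f x + f y.

Definition subset_of (M : lmodType R) (A B : M -> Prop) : Prop :=
  forall x, A x -> B x.
Definition seteq (M : lmodType R) (A B : M -> Prop) : Prop :=
  forall x, A x <-> B x.

Definition submod (M : lmodType R) (N : M -> Prop) : Prop :=
  N 0 /\ forall (a : R) (x y : M), N x -> N y -> N (a *: x + y).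

Definition sumF (M : lmodType R) (I : Type) (N : I -> M -> Prop) : M -> Prop :=
  fun x => forall S : M -> Prop, submod S ->
    (forall i, subset_of (N i) S) -> S x.

(* N_M L = sum { f(N) | f in Hom_R(M, L) } *)
Definition prodM (M : lmodType R) (N L : M -> Prop) : M -> Prop :=
  fun x => forall S : M -> Prop, submod S ->
    (forall f : M -> M, hom f -> (forall m, L (f m)) ->
        forall n, N n -> S (f n)) -> S x.

Definition fully_invariant (M : lmodType R) (N : M -> Prop) : Prop :=
  submod N /\ forall f : M -> M, hom f -> forall x, N x -> N (f x).

Definition generated_by (M G : lmodType R) : Prop :=
  forall g : G, forall S : G -> Prop, submod S ->
    (forall f : M -> G, hom f -> forall m, S (f m)) -> S g.

(* N belongs to sigma[M]: N is isomorphic to a submodule of an M-generated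
   module, i.e. there is an injective homomorphism of N into an M-generated
   module. *)
Definition in_sigma (M N : lmodType R) : Prop :=
  exists (G : lmodType R) (i : N -> G),
    [/\ hom i, injective i & generated_by M G].

Definition projective_in_sigma (M : lmodType R) : Prop :=
  forall (A B : lmodType R), in_sigma M A -> in_sigma M B ->
  forall g : A -> B, hom g -> (forall b : B, exists a : A, g a = b) ->
  forall f : M -> B, hom f ->
  exists h : M -> A, hom h /\ forall m : M, g (h m) = f m.

Definition directed (M : lmodType R) (I : Type) (X : I -> M -> Prop) : Prop :=
  inhabited I /\ forall i j, exists k,
    subset_of (X i) (X k) /\ subset_of (X j) (X k).

Definition Lambda_quasi_quantale (M : lmodType R) : Prop :=
  [/\
      (forall (I : Type) (N : I -> M -> Prop),
         (forall i, submod (N i)) ->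
         [/\ submod (sumF N),
             (forall i, subset_of (N i) (sumF N)) &
             (forall S, submod S -> (forall i, subset_of (N i) S) ->
                subset_of (sumF N) S)]),
      (forall N L : M -> Prop, submod N -> submod L -> submod (prodM N L)),
      (forall N L K : M -> Prop, submod N -> submod L -> submod K ->
         seteq (prodM (prodM N L) K) (prodM N (prodM L K))),
      (forall (I : Type) (X : I -> M -> Prop) (a : M -> Prop),
         (forall i, submod (X i)) -> submod a -> directed X ->
         seteq (prodM (sumF X) a) (sumF (fun i => prodM (X i) a))) &
      (forall (I : Type) (X : I -> M -> Prop) (a : M -> Prop),
         (forall i, submod (X i)) -> submod a -> directed X ->
         seteq (prodM a (sumF X)) (sumF (fun i => prodM a (X i))))].

End ModuleDefs.

From HB Require Import structures.
From mathcomp Require Import all_boot all_order all_algebra.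
From mathcomp Require Import boolp classical_sets functions finmap fsbigop.
Set Implicit Arguments.
Unset Strict Implicit.
Unset Printing Implicit Defensive.
Import GRing.Theory.
Local Open Scope ring_scope.
Local Open Scope classical_set_scope.

(* Projectivity enters through a single lifting argument: a homomorphism
   [h : M -> M] with values in a sum of images [sum_j u_j(Y_j)] factors as
   [h = sum_j u_j o g_j] with [g_j : M -> Y_j], by lifting [h] along the
   epimorphism [(+)_j Y_j -> sum_j u_j(Y_j)]; both modules lie in sigma[M]
   because [(+)_j Y_j] is a submodule of the M-generated module [M^(J)].
   With [u_j = id] this gives distributivity of [N_M -] over sums, and with
   [u] ranging over [Hom(M, K)] it gives [N_M(L_M K) <= (N_M L)_M K].  The
   remaining inclusions and part (2) only use that sums and products are
   generated by images of homomorphisms. *)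

Section Homomorphisms.
Variables (R : pzRingType) (U V W : lmodType R).

Lemma hom0 (f : V -> W) : hom f -> f 0 = 0.
Proof. by move=> hf; have := hf (-1) 0 0; rewrite scaler0 addr0 scaleN1r addNr. Qed.

Lemma hom_id : hom (@id V).
Proof. by []. Qed.

Lemma hom_comp (f : V -> W) (g : U -> V) : hom f -> hom g -> hom (f \o g).
Proof. by move=> hf hg a x y; rewrite /= hg hf. Qed.

End Homomorphisms.

Section Submodules.
Variables (R : pzRingType) (V W : lmodType R).

Lemma submodT : submod (fun _ : V => True).
Proof. by []. Qed.

Lemma submod_sum (S : V -> Prop) (I : Type) (r : seq I) (F : I -> V) :
  submod S -> (forall i, S (F i)) -> S (\sum_(i <- r) F i).
Proof.
move=> [S0 SD] SF; elim: r => [|i r IHr]; first by rewrite big_nil.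
by rewrite big_cons -[F i]scale1r; apply: SD.
Qed.

Lemma submod_preim (f : V -> W) (S : W -> Prop) :
  hom f -> submod S -> submod (fun x => S (f x)).
Proof.
move=> hf [S0 SD]; split; first by rewrite hom0.
by move=> a x y Sx Sy; rewrite hf; apply: SD.
Qed.

Lemma sumF_submod (I : Type) (N : I -> V -> Prop) : submod (sumF N).
Proof.
split; first by move=> S [].
move=> a x y Nx Ny S hS NS.
by apply: hS.2; [apply: Nx | apply: Ny].
Qed.

Lemma sub_sumF (I : Type) (N : I -> V -> Prop) i : subset_of (N i) (sumF N).
Proof. by move=> x Nx S _ NS; apply: NS Nx. Qed.

Lemma sumF_min (I : Type) (N : I -> V -> Prop) (S : V -> Prop) :
  submod S -> (forall i, subset_of (N i) S) -> subset_of (sumF N) S.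
Proof. by move=> hS NS x; apply. Qed.

Lemma prodM_submod (N L : V -> Prop) : submod (prodM N L).
Proof.
split; first by move=> S [].
move=> a x y Nx Ny S hS NS.
by apply: hS.2; [apply: Nx | apply: Ny].
Qed.

Lemma prodM_hom (N L : V -> Prop) (f : V -> V) :
  hom f -> (forall m, L (f m)) -> forall n, N n -> prodM N L (f n).
Proof. by move=> hf fL n Nn S _ NS; apply: NS. Qed.

Lemma prodM_min (N L S : V -> Prop) : submod S ->
  (forall f, hom f -> (forall m, L (f m)) -> forall n, N n -> S (f n)) ->
  subset_of (prodM N L) S.
Proof. by move=> hS NS x; apply. Qed.

End Submodules.

Arguments sub_sumF {R V I N} i x.

Section SubmoduleType.
Variables (R : pzRingType) (V : lmodType R) (P : V -> Prop).

Definition submod_pred (hP : submod P) : {pred V} := fun x => `[< P x >].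

Lemma submod_pred_closed (hP : submod P) : submod_closed (submod_pred hP).
Proof.
case: hP => P0 PD; split; first exact/asboolP.
by move=> a x y /asboolP Px /asboolP Py; apply/asboolP/PD.
Qed.

HB.instance Definition _ (hP : submod P) :=
  GRing.isSubmodClosed.Build R V (submod_pred hP) (submod_pred_closed hP).

Definition submod_type (hP : submod P) := {x : V | submod_pred hP x}.

HB.instance Definition _ (hP : submod P) :=
  [isSub of submod_type hP for @sval V (submod_pred hP)].
HB.instance Definition _ (hP : submod P) := [Choice of submod_type hP by <:].
HB.instance Definition _ (hP : submod P) :=
  [SubChoice_isSubLmodule of submod_type hP by <:].

Variable hP : submod P.

Definition insubmod (x : V) (Px : P x) : submod_type hP := Sub x (asboolT Px).

Lemma insubmodK x (Px : P x) : val (insubmod Px) = x.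
Proof. exact: SubK. Qed.

Lemma submod_valP (x : submod_type hP) : P (val x).
Proof. exact/asboolP/(valP x). Qed.

Lemma hom_val : hom (val : submod_type hP -> V).
Proof. by []. Qed.

End SubmoduleType.

Arguments insubmod {R V P hP x}.

Lemma submod_in_sigma (R : pzRingType) (M W : lmodType R) (Q : W -> Prop)
    (hQ : submod Q) :
  generated_by M W -> in_sigma M (submod_type hQ).
Proof. by move=> genW; exists W, val; split; [apply: hom_val | apply: val_inj |]. Qed.

Lemma generated_by_self (R : pzRingType) (M : lmodType R) : generated_by M M.
Proof. by move=> m S _ MS; apply: (MS id). Qed.

Section DirectSum.
Variables (R : pzRingType) (V : lmodType R) (J : choiceType).

Definition fin_supp (phi : J -> V) :=
  exists s : {fset J}, forall j, j \notin s -> phi j = 0.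

Definition dsum (Y : J -> V -> Prop) (phi : J -> V) :=
  fin_supp phi /\ forall j, Y j (phi j).

Lemma dsum_submod (Y : J -> V -> Prop) :
  (forall j, submod (Y j)) -> submod (dsum Y).
Proof.
move=> hY; split.
  by split=> [|j]; [exists fset0 | case: (hY j)].
move=> a x y [[s xs] Yx] [[t yt] Yy]; split=> [|j]; last exact: (hY j).2.
exists (s `|` t)%fset => j; rewrite inE negb_or => /andP[/xs xj /yt yj].
by rewrite addrfctE scalrfctE /= xj yj scaler0 addr0.
Qed.

Definition single (j : J) (m : V) : J -> V := fun k => if k == j then m else 0.

Lemma single_hom j : hom (single j).
Proof.
move=> a x y; apply/funext => k.
rewrite addrfctE scalrfctE /= /single.
by case: (k == j); rewrite ?scaler0 ?addr0.
Qed.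

Lemma dsum_single (Y : J -> V -> Prop) j m :
  (forall j, submod (Y j)) -> Y j m -> dsum Y (single j m).
Proof.
move=> hY Ym; split=> [|k].
  by exists [fset j]%fset => k; rewrite inE /single => /negPf ->.
by rewrite /single; case: eqP => [-> //|_]; case: (hY k).
Qed.

Lemma sum_single (phi : J -> V) (s : {fset J}) :
  (forall j, j \notin s -> phi j = 0) -> \sum_(j <- s) single j (phi j) = phi.
Proof.
move=> phis; apply/funext => k; rewrite fct_sumE.
have [ks|kNs] := boolP (k \in s).
  rewrite (bigD1_seq k) //= /single eqxx big1 ?addr0 // => j.
  by rewrite eq_sym => /negPf ->.
rewrite phis // big1_seq // => j /andP[_ js].
by rewrite /single; case: eqP => // kj; rewrite kj js in kNs.
Qed.

Definition free_mod := submod_type (dsum_submod (fun _ : J => @submodT R V)).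

Definition free_single j (m : V) : free_mod :=
  insubmod (dsum_single (j := j) (m := m) (fun _ => @submodT R V) I).

Lemma free_single_hom j : hom (free_single j).
Proof. by move=> a x y; apply: val_inj; rewrite hom_val !insubmodK single_hom. Qed.

Lemma free_mod_generated : generated_by V free_mod.
Proof.
move=> g S hS VS; have [[s gs] _] := submod_valP g.
suff -> : g = \sum_(j <- s) free_single j (val g j).
  by apply: submod_sum => // j; exact: (VS _ (free_single_hom j)).
by apply: val_inj; rewrite raddf_sum /= sum_single.
Qed.

Lemma free_dsum_submod (Y : J -> V -> Prop) :
  (forall j, submod (Y j)) -> submod (fun g : free_mod => dsum Y (val g)).
Proof. by move=> hY; apply: submod_preim; [apply: hom_val | apply: dsum_submod]. Qed.

End DirectSum.

Section SumMap.
Variables (R : pzRingType) (V W : lmodType R) (J : choiceType).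
Variables (u : J -> V -> W) (hu : forall j, hom (u j)).

(* Meaningful for finitely supported [phi] only: the finitely supported sum
   is [0] when [u j (phi j) != 0] for infinitely many [j]. *)
Definition sum_map (phi : J -> V) : W := \sum_(j \in [set: J]) u j (phi j).

Lemma submod_sum_map (S : W -> Prop) (phi : J -> V) :
  submod S -> (forall j, S (u j (phi j))) -> S (sum_map phi).
Proof. exact: (@submod_sum _ _ _ _ _ (fun j => u j (phi j))). Qed.

Lemma sum_mapE (phi : J -> V) (s : {fset J}) :
  (forall j, j \notin s -> phi j = 0) -> sum_map phi = \sum_(j <- s) u j (phi j).
Proof. by move=> phis; apply: fsbigTE => j /phis ->; apply: hom0. Qed.

Lemma sum_map_hom a (phi psi : J -> V) : fin_supp phi -> fin_supp psi ->
  sum_map (a *: phi + psi) = a *: sum_map phi + sum_map psi.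
Proof.
move=> [s phis] [t psit].
have st (chi : J -> V) : (forall j, j \notin s -> j \notin t -> chi j = 0) ->
    sum_map chi = \sum_(j <- (s `|` t)%fset) u j (chi j).
  by move=> chi0; apply: sum_mapE => j; rewrite inE negb_or => /andP[/chi0].
rewrite (st phi) => [|j /phis //]; rewrite (st psi) => [|j _ /psit //].
rewrite st => [|j /phis phij /psit psij]; last first.
  by rewrite addrfctE scalrfctE /= phij psij scaler0 addr0.
rewrite scaler_sumr -big_split; apply: eq_bigr => j _; exact: hu.
Qed.

End SumMap.

Section ProjectiveLift.
Variables (R : pzRingType) (M : lmodType R) (J : choiceType).
Variables (Y : J -> M -> Prop) (u : J -> M -> M).
Hypotheses (hY : forall j, submod (Y j)) (hu : forall j, hom (u j)).

Local Notation A := (submod_type (free_dsum_submod hY)).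
Local Notation B := (submod_type (sumF_submod (fun j => u j @` Y j))).

Lemma sum_map_image (phi : J -> M) :
  (forall j, Y j (phi j)) -> sumF (fun j => u j @` Y j) (sum_map u phi).
Proof.
move=> Yphi; apply: submod_sum_map (sumF_submod _) _.
by move=> j; apply: (sub_sumF j); apply: imageP.
Qed.

Definition dsum_proj (a : A) : B := insubmod (sum_map_image (submod_valP a).2).

Lemma dsum_proj_hom : hom dsum_proj.
Proof.
move=> a x y; apply: val_inj; rewrite hom_val !insubmodK !hom_val.
exact: sum_map_hom (submod_valP x).1 (submod_valP y).1.
Qed.

Lemma dsum_proj_surj (b : B) : exists a, dsum_proj a = b.
Proof.
suff [a ab] : exists a : A, sum_map u (val (val a)) = val b.
  by exists a; apply: val_inj; rewrite insubmodK.
pose S x := exists a : A, sum_map u (val (val a)) = x.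
apply: (sumF_min (S := S)) (submod_valP b) => [|j _ [y Yy <-]].
  split; first by exists 0; rewrite (sum_mapE _ (s := fset0)) ?big_nil.
  move=> c _ _ [x <-] [y <-]; exists (c *: x + y).
  by rewrite !hom_val; apply: sum_map_hom (submod_valP x).1 (submod_valP y).1.
exists (insubmod (x := free_single j y) (dsum_single hY Yy)).
rewrite (sum_mapE _ (s := [fset j]%fset)) ?big_seq_fset1 /= /single ?eqxx //.
by move=> k; rewrite inE => /negPf ->.
Qed.

Lemma projective_lift_sum : projective_in_sigma M ->
  forall h : M -> M, hom h -> (forall m, sumF (fun j => u j @` Y j) (h m)) ->
  exists2 g : J -> M -> M, (forall j, hom (g j) /\ forall m, Y j (g j m)) &
    forall m, h m = sum_map u (fun j => g j m).
Proof.
move=> projM h hh hY_h.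
pose f m : B := insubmod (hY_h m).
have hf : hom f by move=> a x y; apply: val_inj; rewrite hom_val !insubmodK hh.
have A_sigma : in_sigma M A by apply: submod_in_sigma; apply: free_mod_generated.
have B_sigma : in_sigma M B by apply: submod_in_sigma; apply: generated_by_self.
have [l [hl lE]] := projM A B A_sigma B_sigma _ dsum_proj_hom dsum_proj_surj f hf.
exists (fun j m => val (val (l m)) j) => [j|m]; last by rewrite -[h m](congr1 val (lE m)).
by split=> [a x y|m]; [rewrite hl !hom_val | apply: (submod_valP (l m)).2].
Qed.

End ProjectiveLift.

Section QuasiQuantale.
Variables (R : pzRingType) (M : lmodType R).

Lemma prodM_sumFl (I : Type) (N : I -> M -> Prop) (L : M -> Prop) :
  seteq (prodM (sumF N) L) (sumF (fun i => prodM (N i) L)).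
Proof.
move=> x; split.
  apply: prodM_min x; first exact: sumF_submod.
  move=> f hf fL; apply: sumF_min; first exact: submod_preim hf (sumF_submod _).
  by move=> i n Nn; apply: (sub_sumF i); apply: prodM_hom.
apply: sumF_min x; first exact: prodM_submod.
move=> i; apply: prodM_min; first exact: prodM_submod.
by move=> f hf fL n Nn; apply: prodM_hom => //; apply: (sub_sumF i).
Qed.

Lemma prodM_sumFr (I : Type) (X : I -> M -> Prop) (N : M -> Prop) :
  projective_in_sigma M -> (forall i, submod (X i)) ->
  seteq (prodM N (sumF X)) (sumF (fun i => prodM N (X i))).
Proof.
move=> projM hX x; split.
  apply: prodM_min x; first exact: sumF_submod.
  move=> h hh hXh n Nn.
  have [|g hg ->] :=
    projective_lift_sum (J := {classic I}) hX (fun _ => @hom_id R M) projM hh.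
    by rewrite (_ : (fun j => _ @` _) = X) // funeqE => j; rewrite image_id.
  apply: submod_sum_map (sumF_submod _) _ => i.
  by apply: (sub_sumF i); apply: prodM_hom (hg i).1 (hg i).2 n Nn.
apply: sumF_min x; first exact: prodM_submod.
move=> i; apply: prodM_min; first exact: prodM_submod.
by move=> f hf fX n Nn; apply: prodM_hom => // m; apply: (sub_sumF i).
Qed.

Lemma prodM_assoc (N L K : M -> Prop) : projective_in_sigma M -> submod L ->
  seteq (prodM (prodM N L) K) (prodM N (prodM L K)).
Proof.
move=> projM hL x; split.
  apply: prodM_min x; first exact: prodM_submod.
  move=> f hf fK; apply: prodM_min; first exact: submod_preim hf (prodM_submod _ _).
  move=> g hg gL n Nn; apply: (prodM_hom (f := f \o g)) Nn; first exact: hom_comp.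
  by move=> m; exact: prodM_hom hf fK _ (gL m).
apply: prodM_min x; first exact: prodM_submod.
move=> h hh hLK n Nn.
pose J := {classic {f : M -> M | hom f /\ forall m, K (f m)}}.
have [|g hg ->] :=
  projective_lift_sum (J := J) (fun _ => hL) (fun f => (svalP f).1) projM hh.
  move=> m; apply: prodM_min (hLK m); first exact: sumF_submod.
  by move=> f hf fK l Ll; apply: (sub_sumF (exist _ f (conj hf fK) : J)); apply: imageP.
apply: submod_sum_map (prodM_submod _ _) _ => f.
apply: prodM_hom; [exact: (svalP f).1 | exact: (svalP f).2 |].
exact: prodM_hom (hg f).1 (hg f).2 n Nn.
Qed.

End QuasiQuantale.

Section FullyInvariant.
Variables (R : pzRingType) (M : lmodType R).

Lemma sumF_fully_invariant (I : Type) (N : I -> M -> Prop) :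
  (forall i, fully_invariant (N i)) -> fully_invariant (sumF N).
Proof.
move=> hN; split=> [|f hf]; first exact: sumF_submod.
apply: sumF_min; first exact: submod_preim hf (sumF_submod _).
by move=> i x Nx; apply: (sub_sumF i); apply: (hN i).2.
Qed.

Lemma prodM_fully_invariant (N L : M -> Prop) :
  fully_invariant L -> fully_invariant (prodM N L).
Proof.
move=> hL; split=> [|p hp]; first exact: prodM_submod.
apply: prodM_min; first exact: submod_preim hp (prodM_submod _ _).
move=> g hg gL n Nn; apply: (prodM_hom (f := p \o g)) Nn; first exact: hom_comp.
by move=> m; exact: hL.2 _ hp _ (gL m).
Qed.

Lemma prodMT_fully_invariant (N : M -> Prop) :
  fully_invariant N -> seteq (prodM N (fun _ => True)) N.
Proof.
move=> hN x; split; last exact: prodM_hom (@hom_id R M) (fun _ => I) x.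
by apply: prodM_min x; [exact: hN.1 | move=> f hf _; apply: hN.2].
Qed.

End FullyInvariant.

Theorem proposition4p3 (R : pzRingType) (M : lmodType R) :
  projective_in_sigma M ->
  (* (1) *)
  (Lambda_quasi_quantale M /\
   (forall (I : Type) (N : I -> M -> Prop) (L : M -> Prop),
      (forall i, submod (N i)) -> submod L ->
      seteq (prodM (sumF N) L) (sumF (fun i => prodM (N i) L)))) /\
  (* (2) *)
  [/\ (forall (I : Type) (N : I -> M -> Prop),
         (forall i, fully_invariant (N i)) -> fully_invariant (sumF N)),
      (forall N L : M -> Prop,
         fully_invariant N -> fully_invariant L ->
         fully_invariant (prodM N L)) &
      (forall N : M -> Prop, fully_invariant N ->
         seteq (prodM N (fun _ : M => True)) N)].
Proof.
move=> projM; split; first split.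
- split.
  + move=> I N _; split; [exact: sumF_submod | exact: sub_sumF | exact: sumF_min].
  + by move=> N L _ _; apply: prodM_submod.
  + by move=> N L K _ hL _; apply: prodM_assoc.
  + by move=> I X a _ _ _; apply: prodM_sumFl.
  + by move=> I X a hX _ _; apply: prodM_sumFr.
- by move=> I N L _ _; apply: prodM_sumFl.
split; [exact: sumF_fully_invariant | | exact: prodMT_fully_invariant].
by move=> N L _; apply: prodM_fully_invariant.
Qed.
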